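(* Let $\alpha>0$ and, for $u_0:\mathbb{R}\to\mathbb{R}$, let $u^*(x)=\sup_{t>0,\ |y-x|\leq\alpha t}P(\cdot,t)*|u_0|(y)$ with $P(x,t)=\frac{1}{\pi}\frac{t}{x^2+t^2}$. (i) If $u_0\in C(\mathbb{R})\cap L^p(\mathbb{R})$ for some $1\leq p<\infty$, then $u^*\in C(\mathbb{R})$. (ii) If $u_0$ is bounded and Lipschitz continuous, then $u^*$ is bounded and Lipschitz continuous with $\mathrm{Lip}(u^* )\leq\mathrm{Lip}(u_0)$.
   Context: $\mathrm{Lip}(u)=\sup_{x\neq y}|u(x)-u(y)|/|x-y|$. *)

From HB Require Import structures.
From mathcomp Require Import all_boot all_order all_algebra.
From mathcomp Require Import all_classical all_reals all_analysis.
Set Implicit Arguments. Unset Strict Implicit. Unset Printing Implicit Defensive.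
Import Order.TTheory GRing.Theory Num.Theory.
Import numFieldNormedType.Exports.
Local Open Scope classical_set_scope.
Local Open Scope ring_scope.

Definition poisson {R : realType} (x t : R) : R :=
  pi^-1 * (t / (x ^+ 2 + t ^+ 2)).

Definition poisson_conv_abs {R : realType} (u0 : R -> R) (t y : R) : \bar R :=
  (\int[@lebesgue_measure R]_(z in setT) (poisson (y - z) t * `|u0 z|)%:E)%E.

Definition ntmax {R : realType} (alpha : R) (u0 : R -> R) (x : R) : \bar R :=
  ereal_sup [set e : \bar R | exists t y : R,
               [/\ 0 < t, `|y - x| <= alpha * t & e = poisson_conv_abs u0 t y]].

Definition Lip {R : realType} (u : R -> R) : \bar R :=
  ereal_sup [set e : \bar R | exists x y : R,
               x != y /\ e = (`|u x - u y| / `|x - y|)%:E].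

From HB Require Import structures.
From mathcomp Require Import all_boot all_order all_algebra.
From mathcomp Require Import all_classical all_reals all_analysis.
From mathcomp Require Import ring lra measurable_realfun.
Set Implicit Arguments. Unset Strict Implicit. Unset Printing Implicit Defensive.
Import Order.TTheory GRing.Theory Num.Theory.
Import numFieldNormedType.Exports.
Local Open Scope classical_set_scope.
Local Open Scope ring_scope.

(** (i) Split the kernel at distance A from y.  Near y, |u0| is controlled by
  its values there; far from y, P(., t) <= t / (pi A^2) and
  a <= e + e^(1-p) a^p bound the contribution by e + e^(1-p) t / (pi A^2) ||u0||_p^p.
  Hence P_t * |u0| is uniformly small for large t, and for t <= T it is locally
  bounded and equicontinuous in y (take A large and use uniform continuity of
  u0 on a compact interval).  Translating x translates the whole cone, so u*
  is finite and continuous.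
  (ii) P_t has integral 1, so P_t * |u0| <= sup |u0|, and
  |u0 z| <= |u0 (z + h)| + L |h| gives P_t * |u0| (y) <= P_t * |u0| (y + h) + L |h|;
  translating the cone again gives Lip(u* ) <= L = Lip(u0). *)

Section change_of_variables.
Variable R : realType.
Local Notation mu := (@lebesgue_measure R).

Lemma ge0_integral_shift (G : R -> R) (c : R) :
  continuous G -> (forall x, 0 <= G x) ->
  (\int[mu]_(z in setT) (G z)%:E = \int[mu]_(z in setT) (G (z + c))%:E)%E.
Proof.
move=> cG G0.
have dF : ((fun x : R => x + c)^`())%classic = cst 1.
  by apply/funext => z; rewrite derive1E deriveD// derive_id derive_cst addr0.
rewrite (@increasing_ge0_integration_by_substitutionT _ (fun x => x + c) G) //.
- by apply: eq_integral => x _; rewrite dF /= mulr1.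
- by move=> x y xy; rewrite ltrD2r.
- by rewrite dF; exact: cst_continuous.
- by rewrite dF; exact: is_cvg_cst.
- by rewrite dF; exact: is_cvg_cst.
- exact: cvg_addrr_Ny.
- exact: cvg_addrr.
Qed.

Lemma ge0_integral_scale (G : R -> R) (t : R) :
  0 < t -> continuous G -> (forall x, 0 <= G x) ->
  (\int[mu]_(z in setT) (G z)%:E = \int[mu]_(z in setT) (G (t * z) * t)%:E)%E.
Proof.
move=> t0 cG G0.
have dF : ((fun x : R => t * x)^`())%classic = cst t.
  apply/funext => z; rewrite derive1E.
  have := @deriveZ R R R id t z 1 (@derivable_id R R z 1).
  by rewrite derive_id /= => h; rewrite -[RHS]mulr1; exact: h.
rewrite (@increasing_ge0_integration_by_substitutionT _ (fun x => t * x) G) //.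
- by apply: eq_integral => x _; rewrite dF.
- by move=> x y xy; rewrite ltr_pM2l.
- by rewrite dF; exact: cst_continuous.
- by rewrite dF; exact: is_cvg_cst.
- by rewrite dF; exact: is_cvg_cst.
- by apply/cvgrNyPle => A; near=> x; rewrite -ler_pdivlMl.
- by apply/cvgryPge => A; near=> x; rewrite -ler_pdivrMl.
Unshelve. all: by end_near. Qed.

End change_of_variables.

Lemma continuous_shift {R : realType} (f : R -> R) (d : R) :
  continuous f -> continuous (fun z => f (z + d)).
Proof.
move=> cf z; apply: continuous_comp; last exact: cf.
by apply: cvgD; [exact: cvg_id | exact: cvg_cst].
Qed.

Section poisson_kernel.
Variable R : realType.
Local Notation mu := (@lebesgue_measure R).
Implicit Types x t : R.

Lemma poissonN x t : poisson (- x) t = poisson x t.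
Proof. by rewrite /poisson sqrrN. Qed.

Lemma poisson_ge0 x t : 0 < t -> 0 <= poisson x t.
Proof.
move=> t0; rewrite /poisson mulr_ge0 ?invr_ge0 ?pi_ge0 // divr_ge0 ?ltW //.
by rewrite ltr_wpDl ?sqr_ge0 // exprn_gt0.
Qed.

Lemma continuous_poisson t : 0 < t -> continuous (poisson ^~ t).
Proof.
move=> t0 x; apply: cvgM; first exact: cvg_cst.
apply: cvgM; first exact: cvg_cst.
apply: cvgV; first by rewrite gt_eqF // ltr_wpDl ?sqr_ge0 // exprn_gt0.
by apply: cvgD; [exact: exprn_continuous | exact: cvg_cst].
Qed.

Lemma integral_poisson t : 0 < t ->
  (\int[mu]_(x in setT) (poisson x t)%:E = 1%:E)%E.
Proof.
move=> t0.
have pi_neq0 : (pi : R) != 0 by rewrite gt_eqF // pi_gt0.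
have oneDsqr_gt0 x : 0 < oneDsqr x by rewrite (lt_le_trans ltr01) // oneDsqr_ge1.
have rescale x : poisson (t * x) t * t = pi^-1 * (oneDsqr x)^-1.
  have d_neq0 : (t * x) ^+ 2 + t ^+ 2 != 0.
    by rewrite gt_eqF // ltr_wpDl ?sqr_ge0 // exprn_gt0.
  have := oneDsqr_gt0 x; rewrite /poisson /oneDsqr => /gt_eqF/negbT o_neq0.
  by rewrite -mulrA; congr (_ * _); field; rewrite o_neq0 d_neq0.
rewrite (@ge0_integral_scale _ (poisson ^~ t) t) //; last 2 first.
- exact: continuous_poisson.
- by move=> x; exact: poisson_ge0.
under eq_integral do rewrite rescale EFinM.
rewrite ge0_integralZl_EFin //; last 2 first.
- apply/measurable_EFinP; apply: continuous_measurable_fun.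
  exact: continuous_oneDsqrV.
- by rewrite invr_ge0 pi_ge0.
rewrite ge0_symfun_integralT; last 3 first.
- by move=> x; rewrite invr_ge0 ltW.
- exact: continuous_oneDsqrV.
- by move=> x /=; rewrite /oneDsqr sqrrN.
rewrite -set_itvcy integral0y_oneDsqr -!EFinM.
by rewrite [2 * _]mulrC -mulrA mulVf ?pnatr_eq0 // mulr1 mulVf.
Qed.

Lemma poisson_le_inv t x : 0 < t -> poisson x t <= pi^-1 * t^-1.
Proof.
move=> t0; rewrite /poisson ler_wpM2l ?invr_ge0 ?pi_ge0 //.
rewrite ler_pdivrMr; last by rewrite ltr_wpDl ?sqr_ge0 ?exprn_gt0.
rewrite mulrDr [t ^+ 2]expr2 mulKf ?gt_eqF // lerDr.
by rewrite mulr_ge0 ?invr_ge0 ?sqr_ge0 // ltW.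
Qed.

Lemma poisson_le_tail t T A x : 0 < t -> t <= T -> 0 < A -> A < `|x| ->
  poisson x t <= pi^-1 * (T / A ^+ 2).
Proof.
move=> t0 tT A0 Ax; rewrite /poisson ler_wpM2l ?invr_ge0 ?pi_ge0 //.
have Ax2 : A ^+ 2 <= x ^+ 2.
  by rewrite -(real_normK (num_real x)); have := ltW Ax; nra.
apply: (@le_trans _ _ (t / A ^+ 2)); last by rewrite ler_wpM2r ?invr_ge0 ?sqr_ge0.
rewrite ler_wpM2l ?(ltW t0) // lef_pV2 ?posrE ?exprn_gt0 //.
  by rewrite (le_trans Ax2) // lerDl sqr_ge0.
by rewrite ltr_wpDl ?sqr_ge0 ?exprn_gt0.
Qed.

End poisson_kernel.

Lemma ler_eps_powR {R : realType} (a e p : R) : 0 <= a -> 0 < e -> 1 <= p ->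
  a <= e + (e `^ (p - 1))^-1 * a `^ p.
Proof.
move=> a0 e0 p1.
have [ae|ea] := leP a e.
  by rewrite ler_wpDr // mulr_ge0 ?invr_ge0 ?powR_ge0.
have a_gt0 : 0 < a by rewrite (lt_trans e0).
rewrite -(mulr_powRB1 (ltW a_gt0)); last exact: lt_le_trans ltr01 p1.
apply: ler_wpDl; first exact: ltW.
rewrite mulrCA ler_pMr // ler_pdivlMl ?powR_gt0 // mulr1.
by apply: ge0_ler_powR; rewrite ?nnegrE ?subr_ge0 // ltW.
Qed.

Lemma ler_mul_near_far {R : realType} (P a b e p K : R) :
  0 <= P -> 0 <= a -> 0 <= b -> 0 < e -> 1 <= p -> 0 <= K ->
  a <= b \/ P <= K -> P * a <= P * (b + e) + (e `^ (p - 1))^-1 * K * a `^ p.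
Proof.
move=> P0 a0 b0 e0 p1 K0; set c := (e `^ (p - 1))^-1.
have cap0 : 0 <= c * a `^ p by rewrite mulr_ge0 ?invr_ge0 ?powR_ge0.
have eP0 := mulr_ge0 (ltW e0) P0.
case=> [ab|PK].
  have Pab := ler_wpM2l P0 ab; have Kcap0 := mulr_ge0 K0 cap0; nra.
have Pa := ler_wpM2l P0 (ler_eps_powR a0 e0 p1); have PKcap := ler_wpM2r cap0 PK.
have Pb0 := mulr_ge0 P0 b0; rewrite -/c in Pa; nra.
Qed.

Definition poisson_conv {R : realType} (g : R -> R) (t y : R) : \bar R :=
  (\int[@lebesgue_measure R]_(z in setT) (poisson (y - z) t * g z)%:E)%E.

Section poisson_convolution.
Variables (R : realType) (t : R).
Hypothesis t_gt0 : 0 < t.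
Local Notation mu := (@lebesgue_measure R).
Implicit Types (g h : R -> R) (y : R).

Lemma continuous_poisson_sub y : continuous (fun z => poisson (y - z) t).
Proof.
move=> z; apply: (@continuous_comp _ _ _ (fun z : R => y - z) (poisson ^~ t)).
  by apply: cvgB; [exact: cvg_cst | exact: cvg_id].
exact: continuous_poisson.
Qed.

Lemma measurable_poisson_mul g y : continuous g ->
  measurable_fun setT (fun z : R => (poisson (y - z) t * g z)%:E).
Proof.
move=> cg; apply/measurable_EFinP; apply: continuous_measurable_fun => z.
by apply: cvgM; [exact: continuous_poisson_sub | exact: cg].
Qed.

Lemma poisson_conv_ge0 g y : (forall z, 0 <= g z) -> (0 <= poisson_conv g t y)%E.
Proof.
by move=> g0; apply: integral_ge0 => z _; rewrite lee_fin mulr_ge0 ?poisson_ge0.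
Qed.

Lemma integral_poisson_sub y :
  (\int[mu]_(z in setT) (poisson (y - z) t)%:E = 1%:E)%E.
Proof.
rewrite (@ge0_integral_shift _ (fun z => poisson (y - z) t) y); last 2 first.
- exact: continuous_poisson_sub.
- by move=> z; exact: poisson_ge0.
under eq_integral do rewrite opprD addrCA subrr addr0 poissonN.
exact: integral_poisson.
Qed.

Lemma poisson_conv_cst y (B : R) : 0 <= B -> poisson_conv (fun=> B) t y = B%:E.
Proof.
move=> B0; rewrite /poisson_conv; under eq_integral do rewrite mulrC EFinM.
rewrite ge0_integralZl_EFin //; last 2 first.
- by move=> z _; rewrite lee_fin poisson_ge0.
- by apply/measurable_EFinP; apply: continuous_measurable_fun; exact: continuous_poisson_sub.
by rewrite integral_poisson_sub mule1.
Qed.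

Lemma le_poisson_conv g h y : continuous g -> continuous h ->
  (forall z, 0 <= g z) -> (forall z, g z <= h z) ->
  (poisson_conv g t y <= poisson_conv h t y)%E.
Proof.
move=> cg ch g0 gh; apply: ge0_le_integral => //.
- by move=> z _; rewrite lee_fin mulr_ge0 ?poisson_ge0.
- exact: measurable_poisson_mul.
- exact: measurable_poisson_mul.
- by move=> z _; rewrite lee_fin ler_wpM2l ?poisson_ge0.
Qed.

Lemma poisson_convD g h y : continuous g -> continuous h ->
  (forall z, 0 <= g z) -> (forall z, 0 <= h z) ->
  poisson_conv (g \+ h) t y = (poisson_conv g t y + poisson_conv h t y)%E.
Proof.
move=> cg ch g0 h0; rewrite /poisson_conv -ge0_integralD //.
- by apply: eq_integral => z _; rewrite mulrDr EFinD.
- by move=> z _; rewrite lee_fin mulr_ge0 ?poisson_ge0.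
- exact: measurable_poisson_mul.
- by move=> z _; rewrite lee_fin mulr_ge0 ?poisson_ge0.
- exact: measurable_poisson_mul.
Qed.

Lemma poisson_conv_shift g d y : continuous g -> (forall z, 0 <= g z) ->
  poisson_conv (fun z => g (z + d)) t y = poisson_conv g t (y + d).
Proof.
move=> cg g0; rewrite /poisson_conv.
rewrite (@ge0_integral_shift _ (fun z => poisson (y + d - z) t * g z) d).
- by apply: eq_integral => z _; rewrite opprD addrACA subrr addr0.
- by move=> z; apply: cvgM; [exact: continuous_poisson_sub | exact: cg].
- by move=> z; rewrite mulr_ge0 ?poisson_ge0.
Qed.

Lemma poisson_conv_le_shift g d w y : continuous g -> (forall z, 0 <= g z) ->
  0 <= w -> (forall z, g z <= g (z + d) + w) ->
  (poisson_conv g t y <= poisson_conv g t (y + d) + w%:E)%E.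
Proof.
move=> cg g0 w0 gw.
have cgd : continuous (fun z => g (z + d)) := continuous_shift cg.
rewrite -poisson_conv_shift // -(poisson_conv_cst y w0) -poisson_convD //.
- by apply: le_poisson_conv => //; move=> z; apply: cvgD; [exact: cgd | exact: cvg_cst].
- by move=> z; exact: cvg_cst.
Qed.

Lemma poisson_conv_le_split g h (p Q e A K y : R) :
  continuous g -> continuous h -> (forall z, 0 <= g z) -> (forall z, 0 <= h z) ->
  1 <= p -> 0 < e -> 0 <= K ->
  (\int[mu]_(z in setT) (g z `^ p)%:E <= Q%:E)%E ->
  (forall z, `|y - z| <= A -> g z <= h z) ->
  (forall z, A < `|y - z| -> poisson (y - z) t <= K) ->
  (poisson_conv g t y <=
   poisson_conv h t y + (e + (e `^ (p - 1))^-1 * K * Q)%:E)%E.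
Proof.
move=> cg ch g0 h0 p1 e0 K0 gQ gh tailK.
set c := (e `^ (p - 1))^-1.
have c0 : 0 <= c by rewrite invr_ge0 powR_ge0.
have mgp : measurable_fun setT (fun z => g z `^ p).
  exact: measurableT_comp (measurable_powR p) (continuous_measurable_fun cg).
have mcgp : measurable_fun setT (fun z => (c * K * g z `^ p)%:E).
  by apply/measurable_EFinP; exact: measurable_funM.
have che : continuous (h \+ fun=> e).
  by move=> z; apply: cvgD; [exact: ch | exact: cvg_cst].
have pointwise z :
    poisson (y - z) t * g z <= poisson (y - z) t * (h z + e) + c * K * g z `^ p.
  apply: ler_mul_near_far => //; first exact: poisson_ge0.
  by have [/gh|/tailK] := leP `|y - z| A; [left | right].
apply: (@le_trans _ (\bar R) (\int[mu]_(z in setT)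
    ((poisson (y - z) t * (h \+ fun=> e) z)%:E + (c * K * g z `^ p)%:E))%E).
  apply: ge0_le_integral => //.
  - by move=> z _; rewrite lee_fin mulr_ge0 ?poisson_ge0.
  - exact: measurable_poisson_mul.
  - by apply: emeasurable_funD => //; exact: measurable_poisson_mul.
  - by move=> z _; rewrite -EFinD lee_fin.
rewrite ge0_integralD //; last 3 first.
- by move=> z _; rewrite lee_fin /= mulr_ge0 ?poisson_ge0 // addr_ge0 // ltW.
- exact: measurable_poisson_mul.
- by move=> z _; rewrite lee_fin !mulr_ge0 ?powR_ge0.
rewrite -/(poisson_conv (h \+ fun=> e) t y) poisson_convD //; last 2 first.
- by move=> z; exact: cvg_cst.
- by move=> z; exact: ltW.
rewrite poisson_conv_cst ?(ltW e0) // EFinD -addeA.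
apply: leeD2l; apply: leeD2l.
under eq_integral do rewrite EFinM.
rewrite ge0_integralZl_EFin ?mulr_ge0 //; last 2 first.
- by move=> z _; rewrite lee_fin powR_ge0.
- exact/measurable_EFinP.
rewrite (EFinM (c * K)); apply: lee_wpmul2l => //.
by rewrite lee_fin mulr_ge0.
Qed.

End poisson_convolution.

Section Lipschitz_constant.
Variable R : realType.
Implicit Types (u : R -> R) (a b : R).

Lemma Lip_ge0 u : (0 <= Lip u)%E.
Proof.
apply: le_trans (_ : ((`|u 0 - u 1| / `|0 - 1|)%:E <= _)%E).
  by rewrite lee_fin divr_ge0.
by apply: ereal_sup_ubound; exists 0, 1; rewrite eq_sym oner_neq0.
Qed.

Lemma ler_Lip u a b : (Lip u < +oo)%E -> `|u a - u b| <= fine (Lip u) * `|a - b|.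
Proof.
move=> Lfin; have [->|ab] := eqVneq a b; first by rewrite !subrr normr0 mulr0.
have : ((`|u a - u b| / `|a - b|)%:E <= Lip u)%E.
  by apply: ereal_sup_ubound; exists a, b.
rewrite -[Lip u]fineK ?ge0_fin_numE ?Lip_ge0 // lee_fin.
by rewrite ler_pdivrMr ?normr_gt0 ?subr_eq0 // mulrC.
Qed.

Lemma Lip_le u (L : R) :
  (forall a b, `|u a - u b| <= L * `|a - b|) -> (Lip u <= L%:E)%E.
Proof.
move=> uL; apply: ge_ereal_sup => _ [a [b [ab ->]]].
by rewrite lee_fin ler_pdivrMr ?normr_gt0 ?subr_eq0.
Qed.

Lemma lipschitz_continuous u (L : R) :
  (forall a b, `|u a - u b| <= L * `|a - b|) -> continuous u.
Proof.
move=> uL x; apply/cvgrPdist_le => e e0.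
have L1 : 0 < `|L| + 1 by rewrite ltr_pwDr.
near=> y.
apply: (le_trans (uL x y)); apply: (le_trans (ler_norm _)).
rewrite normrM; apply: (@le_trans _ _ (`|L| * (e / (`|L| + 1)))).
  apply: ler_wpM2l => //; rewrite normr_id.
  near: y; apply/nbhs_ballP; exists (e / (`|L| + 1)) => /=; first by rewrite divr_gt0.
  by move=> y; rewrite /ball /= => /ltW.
by rewrite mulrCA ger_pMr // ler_pdivrMr // mul1r lerDl.
Unshelve. all: by end_near. Qed.

End Lipschitz_constant.

Lemma fine_dist_le {R : realType} (e1 e2 : \bar R) (c : R) :
  e1 \is a fin_num -> e2 \is a fin_num ->
  (e1 <= e2 + c%:E)%E -> (e2 <= e1 + c%:E)%E -> `|fine e1 - fine e2| <= c.
Proof.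
case: e1 e2 => [r1||] // [r2||] // _ _.
rewrite -!EFinD !lee_fin /= => h1 h2.
by rewrite ler_norml; apply/andP; split; lra.
Qed.

Lemma unif_continuous_segment {R : realType} (g : R -> R) (a b w : R) :
  continuous g -> 0 < w -> exists2 d, 0 < d &
    forall u v, a <= u <= b -> `|u - v| <= d -> `|g u - g v| <= w.
Proof.
move=> cg w0.
have : \forall d \near 0^'+, `[a, b] `<=`
    (fun u => forall v, `|u - v| <= d -> `|g u - g v| <= w).
  apply: (proj1 (compact_near_coveringP `[a, b]) (@segment_compact R a b)).
  move=> x _.
  have /cvgrPdist_lt/(_ (w / 2)) := cg x.
  rewrite divr_gt0 // => /(_ isT) /nbhs_ballP [e e0 He].
  near=> x' i => v /= hv.
  have x'x : `|x - x'| < e / 2.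
    near: x'; apply/nbhs_ballP; exists (e / 2) => /=; first by rewrite divr_gt0.
    by move=> y; rewrite /ball.
  have ie : i < e / 2 by near: i; apply: nbhs_right_lt; rewrite divr_gt0.
  have xv : `|x - v| < e.
    rewrite (splitr e); apply: (le_lt_trans (ler_distD x' _ _)).
    by rewrite ltrD // (le_lt_trans hv).
  have gxx' : `|g x - g x'| < w / 2.
    by apply: He; rewrite /ball /= (lt_trans x'x) // ltr_pdivrMr // ltr_pMr // ltr1n.
  have gxv : `|g x - g v| < w / 2 by apply: He.
  rewrite (splitr w); apply: (le_trans (ler_distD (g x) _ _)).
  by rewrite distrC ltW // ltrD.
move=> /(filterI (@nbhs_right_gt R 0))/filter_ex [d [d0 Hd]].
by exists d => // u v uab uv; apply: Hd => //; rewrite /= in_itv.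
Unshelve. all: by end_near. Qed.

Section nontangential_maximal_function.
Variables (R : realType) (alpha : R) (u0 : R -> R).
Hypothesis alpha_gt0 : 0 < alpha.
Local Notation g := (fun z => `|u0 z|).

Lemma ntmax_ubound x t y : 0 < t -> `|y - x| <= alpha * t ->
  (poisson_conv g t y <= ntmax alpha u0 x)%E.
Proof. by move=> t0 yx; apply: ereal_sup_ubound; exists t, y. Qed.

Lemma ge_ntmax x (B : \bar R) :
  (forall t y, 0 < t -> `|y - x| <= alpha * t -> (poisson_conv g t y <= B)%E) ->
  (ntmax alpha u0 x <= B)%E.
Proof. by move=> gB; apply: ge_ereal_sup => _ [t [y [t0 yx ->]]]; exact: gB. Qed.

Lemma ntmax_ge0 x : (0 <= ntmax alpha u0 x)%E.
Proof.
apply: le_trans (poisson_conv_ge0 ltr01 x (fun z => normr_ge0 (u0 z))) _.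
by apply: ntmax_ubound => //; rewrite subrr normr0 mulr1 ltW.
Qed.

Lemma ntmax_le_translate x x' (c : R) :
  (forall t y, 0 < t -> `|y - x| <= alpha * t ->
    (poisson_conv g t y <= poisson_conv g t (y + (x' - x)) + c%:E)%E) ->
  (ntmax alpha u0 x <= ntmax alpha u0 x' + c%:E)%E.
Proof.
move=> gc; apply: ge_ntmax => t y t0 yx.
apply: le_trans (gc t y t0 yx) _; apply: leeD2r; apply: ntmax_ubound => //.
by have -> : y + (x' - x) - x' = y - x by ring.
Qed.

Lemma ntmax_le_sup (M : R) x : continuous u0 -> (forall z, `|u0 z| <= M) ->
  (ntmax alpha u0 x <= M%:E)%E.
Proof.
move=> cu0 u0M; apply: ge_ntmax => t y t0 _.
have M0 : 0 <= M := le_trans (normr_ge0 _) (u0M 0).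
rewrite -(poisson_conv_cst t0 y M0); apply: le_poisson_conv => //.
- by move=> z; apply: continuous_comp; [exact: cu0 | exact: norm_continuous].
- by move=> z; exact: cvg_cst.
Qed.

End nontangential_maximal_function.

Section bounded_Lipschitz_data.
Variables (R : realType) (alpha L : R) (u0 : R -> R).
Hypotheses (alpha_gt0 : 0 < alpha)
  (u0_lip : forall a b, `|u0 a - u0 b| <= L * `|a - b|).
Local Notation g := (fun z => `|u0 z|).

Let L_ge0 : 0 <= L.
Proof. by have := u0_lip 1 0; rewrite subr0 normr1 mulr1; apply: le_trans. Qed.

Let g_lip a b : `|g a - g b| <= L * `|a - b|.
Proof. exact: le_trans (ler_dist_dist _ _) (u0_lip a b). Qed.

Let cg : continuous g := lipschitz_continuous g_lip.

Lemma ntmax_lipschitz x x' :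
  (ntmax alpha u0 x <= ntmax alpha u0 x' + (L * `|x - x'|)%:E)%E.
Proof.
apply: ntmax_le_translate => t y t0 _.
apply: poisson_conv_le_shift => //; first exact: mulr_ge0.
move=> z; have := g_lip z (z + (x' - x)); rewrite opprD addNKr normrN (distrC x').
by rewrite -lerBlDl; apply: le_trans (ler_norm _).
Qed.

End bounded_Lipschitz_data.

Lemma ntmax_bounded_Lipschitz (R : realType) (alpha : R) (u0 : R -> R) :
  0 < alpha -> (exists M : R, forall x, `|u0 x| <= M) -> (Lip u0 < +oo)%E ->
  (forall x, ntmax alpha u0 x \is a fin_num) /\
  (exists M : R, forall x, `|fine (ntmax alpha u0 x)| <= M) /\
  (Lip (fun x => fine (ntmax alpha u0 x)) <= Lip u0)%E.
Proof.
move=> alpha_gt0 [M u0M] Lfin.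
have u0_lip a b := ler_Lip a b Lfin.
have cu0 := lipschitz_continuous u0_lip.
have ntmaxM x : (ntmax alpha u0 x <= M%:E)%E by exact: ntmax_le_sup.
have fin x : ntmax alpha u0 x \is a fin_num.
  by rewrite ge0_fin_numE ?ntmax_ge0 // (le_lt_trans (ntmaxM x)) ?ltry.
split=> //; split.
  exists M => x; rewrite ger0_norm ?fine_ge0 ?ntmax_ge0 //.
  by rewrite -lee_fin fineK.
rewrite -[Lip u0]fineK ?ge0_fin_numE ?Lip_ge0 //; apply: Lip_le => a b.
apply: fine_dist_le => //; first exact: ntmax_lipschitz.
by rewrite distrC; exact: ntmax_lipschitz.
Qed.

Section Lp_data.
Variables (R : realType) (alpha : R) (u0 : R -> R) (p Q : R).
Hypotheses (alpha_gt0 : 0 < alpha) (cu0 : continuous u0) (p_ge1 : 1 <= p)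
  (u0Q : (\int[@lebesgue_measure R]_(z in setT) (`|u0 z| `^ p)%:E <= Q%:E)%E).
Local Notation g := (fun z => `|u0 z|).

Let cg : continuous g.
Proof. by move=> x; apply: continuous_comp; [exact: cu0 | exact: norm_continuous]. Qed.

Let g_ge0 z : 0 <= g z. Proof. exact: normr_ge0. Qed.

Let Q_ge0 : 0 <= Q.
Proof. by rewrite -lee_fin (le_trans _ u0Q) // integral_ge0. Qed.

Lemma poisson_conv_le_large_time e : 0 < e -> exists2 T, 0 < T &
  forall t y, T <= t -> (poisson_conv g t y <= e%:E)%E.
Proof.
move=> e0; set e2 := e / 2.
have e2_gt0 : 0 < e2 by rewrite divr_gt0.
set X := (e2 `^ (p - 1))^-1 * pi^-1 * Q.
have X_ge0 : 0 <= X by rewrite !mulr_ge0 ?invr_ge0 ?powR_ge0 ?pi_ge0.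
have T_gt0 : 0 < 1 + X / e2 by rewrite ltr_wpDr // divr_ge0 // ltW.
exists (1 + X / e2) => // t y tT.
have t0 : 0 < t := lt_le_trans T_gt0 tT.
have K_ge0 : 0 <= pi^-1 * t^-1 by rewrite mulr_ge0 ?invr_ge0 ?pi_ge0 ?ltW.
apply: (le_trans (@poisson_conv_le_split _ _ t0 g (fun=> 0) p Q e2 (-1)
  (pi^-1 * t^-1) y cg (fun=> cvg_cst _) g_ge0 (fun=> lexx 0) p_ge1 e2_gt0 K_ge0 u0Q _ _)).
- by move=> z /(le_trans (normr_ge0 _)); rewrite ler0N1.
- by move=> z _; exact: poisson_le_inv.
rewrite poisson_conv_cst // add0e lee_fin [leRHS]splitr lerD2l.
have -> : (e2 `^ (p - 1))^-1 * (pi^-1 / t) * Q = X / t by rewrite /X; ring.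
rewrite ler_pdivrMr // (le_trans _ (ler_wpM2l (ltW e2_gt0) tT)) //.
by rewrite mulrDr mulr1 mulrCA divff ?gt_eqF // mulr1 lerDr ltW.
Qed.

Lemma poisson_conv_bounded_small_time x0 a T : 0 < T -> 0 <= a -> exists b : R,
  forall t y, 0 < t -> t <= T -> `|y - x0| <= a -> (poisson_conv g t y <= b%:E)%E.
Proof.
move=> T0 a0.
have [m _ g_le_m] : exists2 m, m \in `[x0 - a - 1, x0 + a + 1] &
    forall z, z \in `[x0 - a - 1, x0 + a + 1] -> g z <= g m.
  by apply: EVT_max; [lra | exact: continuous_subspaceT].
set K := pi^-1 * (T / 1 ^+ 2).
have K_ge0 : 0 <= K by rewrite mulr_ge0 ?invr_ge0 ?pi_ge0 ?divr_ge0 ?sqr_ge0 ?ltW.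
exists (g m + (1 + (1 `^ (p - 1))^-1 * K * Q)) => t y t0 tT yx0.
rewrite EFinD -(poisson_conv_cst t0 y (g_ge0 m)).
apply: (@poisson_conv_le_split _ _ t0 g (fun=> g m) p Q 1 1 K y cg
  (fun=> cvg_cst _) g_ge0 (fun=> g_ge0 m) p_ge1 ltr01 K_ge0 u0Q).
- move=> z yz; apply: g_le_m; rewrite in_itv /=.
  by move: yx0 yz; rewrite !ler_norml => /andP[? ?] /andP[? ?]; apply/andP; split; lra.
- by move=> z yz; apply: poisson_le_tail => //; exact: ltr01.
Qed.

Lemma poisson_conv_equicontinuous x0 a T e : 0 < T -> 0 <= a -> 0 < e ->
  exists2 d, 0 < d & forall t y d', 0 < t -> t <= T -> `|y - x0| <= a ->
  `|d'| <= d -> (poisson_conv g t y <= poisson_conv g t (y + d') + e%:E)%E.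
Proof.
move=> T0 a0 e0; set e3 := e / 3.
have e3_gt0 : 0 < e3 by rewrite divr_gt0.
set Y := (e3 `^ (p - 1))^-1 * pi^-1 * T * Q.
have Y_ge0 : 0 <= Y by rewrite !mulr_ge0 ?invr_ge0 ?powR_ge0 ?pi_ge0 // ltW.
set A := 1 + Y / e3.
have A_ge1 : 1 <= A by rewrite lerDl divr_ge0 // ltW.
have A_gt0 : 0 < A := lt_le_trans ltr01 A_ge1.
have e3A : e3 * A = e3 + Y by rewrite mulrDr mulr1 mulrCA divff ?gt_eqF // mulr1.
set K := pi^-1 * (T / A ^+ 2).
have K_ge0 : 0 <= K by rewrite mulr_ge0 ?invr_ge0 ?pi_ge0 ?divr_ge0 ?sqr_ge0 ?ltW.
have [d d0 gd] := unif_continuous_segment (x0 - a - A) (x0 + a + A) cg e3_gt0.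
exists d => // t y d' t0 tT yx0 d'd.
have cgd' : continuous (fun z => g (z + d')) := continuous_shift cg.
have h_ge0 z : 0 <= ((fun z => g (z + d')) \+ fun=> e3) z by rewrite /= addr_ge0 // ltW.
apply: (le_trans (@poisson_conv_le_split _ _ t0 g ((fun z => g (z + d')) \+ fun=> e3)
  p Q e3 A K y cg _ g_ge0 h_ge0 p_ge1 e3_gt0 K_ge0 u0Q _ _)).
- by move=> z; apply: cvgD; [exact: cgd' | exact: cvg_cst].
- move=> z yz /=; rewrite -lerBlDl; apply: le_trans (ler_norm _) _.
  apply: gd; last by rewrite opprD addNKr normrN.
  by move: yx0 yz; rewrite !ler_norml => /andP[? ?] /andP[? ?]; apply/andP; split; lra.
- by move=> z yz; exact: poisson_le_tail.
rewrite poisson_convD //; last 2 first.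
- by move=> z; exact: cvg_cst.
- by move=> z; exact: ltW.
rewrite (poisson_conv_shift (g := g) t0 d') // poisson_conv_cst ?(ltW e3_gt0) //.
rewrite -addeA; apply: leeD2l; rewrite -EFinD lee_fin.
have -> : (e3 `^ (p - 1))^-1 * K * Q = Y / A ^+ 2 by rewrite /K /Y; ring.
have -> : e = e3 + e3 + e3 by rewrite /e3; field.
rewrite addrA lerD2l ler_pdivrMr ?exprn_gt0 //.
nra.
Qed.

Lemma ntmax_Lp_fin_num x : ntmax alpha u0 x \is a fin_num.
Proof.
have [T T0 gT] := poisson_conv_le_large_time ltr01.
have aT : 0 <= alpha * T by rewrite mulr_ge0 ?ltW.
have [b gb] := poisson_conv_bounded_small_time x T0 aT.
rewrite ge0_fin_numE ?ntmax_ge0 //; apply: (@le_lt_trans _ _ (1 + `|b|)%:E); last exact: ltry.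
apply: ge_ntmax => t y t0 yx; have [Tt|tT] := leP T t.
  by rewrite (le_trans (gT t y Tt)) // lee_fin lerDl.
rewrite (le_trans (gb t y t0 (ltW tT) _)) ?lee_fin ?(le_trans (ler_norm b)) ?lerDr //.
by rewrite (le_trans yx) // ler_pM2l // ltW.
Qed.

Lemma ntmax_Lp_le_near x0 e : 0 < e -> exists2 d, 0 < d & forall x x',
  `|x - x0| < d -> `|x' - x0| < d -> (ntmax alpha u0 x <= ntmax alpha u0 x' + e%:E)%E.
Proof.
move=> e0.
have [T T0 gT] := poisson_conv_le_large_time e0.
have a_ge0 : 0 <= alpha * T + 1 by rewrite addr_ge0 ?mulr_ge0 ?ltW.
have [d d0 gd] := poisson_conv_equicontinuous x0 T0 a_ge0 e0.
set r := Num.min d 1 / 2.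
have r_gt0 : 0 < r by rewrite divr_gt0 // lt_min d0 ltr01.
have r_le1 : r <= 1 / 2 by rewrite ler_pM2r // ge_min lexx orbT.
have rr_le_d : r + r <= d by rewrite -splitr ge_min lexx.
exists r => // x x' xx0 x'x0; apply: ntmax_le_translate => t y t0 yx.
have [Tt|tT] := leP T t.
  apply: le_trans (gT t y Tt) _.
  by rewrite -[leLHS]add0e leeD2r // poisson_conv_ge0.
apply: gd => //; first exact: ltW.
  have : alpha * t <= alpha * T by rewrite ler_pM2l // ltW.
  move: yx xx0; rewrite ler_norml ltr_norml => /andP[? ?] /andP[? ?] ?.
  by rewrite ler_norml; apply/andP; split; lra.
move: xx0 x'x0; rewrite !ltr_norml ler_norml => /andP[? ?] /andP[? ?].
by apply/andP; split; lra.
Qed.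

Lemma continuous_ntmax_Lp : continuous (fun x => fine (ntmax alpha u0 x)).
Proof.
move=> x0; apply/cvgrPdist_le => e e0.
have [d d0 near_le] := ntmax_Lp_le_near x0 e0.
near=> x.
have xx0 : `|x - x0| < d.
  by near: x; apply/nbhs_ballP; exists d => //= x; rewrite /ball /= distrC.
have x0x0 : `|x0 - x0| < d by rewrite subrr normr0.
by apply: fine_dist_le; rewrite ?ntmax_Lp_fin_num //; exact: near_le.
Unshelve. all: by end_near. Qed.

End Lp_data.

Lemma ntmax_Lp_fin_continuous (R : realType) (alpha : R) (u0 : R -> R) :
  0 < alpha -> continuous u0 ->
  (exists p : R, 1 <= p /\
    (\int[@lebesgue_measure R]_(z in setT) ((`|u0 z| `^ p)%:E) < +oo)%E) ->
  (forall x, ntmax alpha u0 x \is a fin_num) /\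
  continuous (fun x => fine (ntmax alpha u0 x)).
Proof.
move=> alpha_gt0 cu0 [p [p_ge1 u0_Lp]].
set I := (\int[_]_(z in setT) _)%E in u0_Lp.
have u0Q : (I <= (fine I)%:E)%E.
  by rewrite fineK // ge0_fin_numE // integral_ge0 // => z _; rewrite lee_fin powR_ge0.
by split; [exact: ntmax_Lp_fin_num u0Q | exact: continuous_ntmax_Lp u0Q].
Qed.

Theorem lemma20 (R : realType) (alpha : R) (halpha : 0 < alpha) (u0 : R -> R) :
  (* (i) *)
  ((continuous u0 /\
    exists p : R, 1 <= p /\
      (\int[@lebesgue_measure R]_(z in setT) ((`|u0 z| `^ p)%:E) < +oo)%E) ->
   (forall x, ntmax alpha u0 x \is a fin_num) /\
   continuous (fun x => fine (ntmax alpha u0 x)))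
  /\
  (* (ii) *)
  ((exists M : R, forall x, `|u0 x| <= M) -> (Lip u0 < +oo)%E ->
   (forall x, ntmax alpha u0 x \is a fin_num) /\
   (exists M : R, forall x, `|fine (ntmax alpha u0 x)| <= M) /\
   (Lip (fun x => fine (ntmax alpha u0 x)) <= Lip u0)%E).
Proof.
split; first by move=> [cu0 u0_Lp]; exact: ntmax_Lp_fin_continuous.
exact: ntmax_bounded_Lipschitz.
Qed.
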